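(* Let $A,A'\in\mathbb{C}^{n\times n}$ with $\|A\|_F=\|A'\|_F=1$, let $v,v'\in\mathbb{C}^n$ be nonzero, and let $\lambda,\lambda'\in\mathbb{C}$ with $Av=\lambda v$. Suppose $\mu(A,\lambda,v)\big(\|A'-A\|_F+|\lambda'-\lambda|+d_{\mathbb{P}}(v',v)\big)\le\frac{\varepsilon}{7.2}$ for some $0<\varepsilon\le0.37$. Then $\frac1{1+\varepsilon}\mu(A,\lambda,v)\le\mu(A',\lambda',v')\le(1+\varepsilon)\mu(A,\lambda,v)$.
   Context: $\|\cdot\|_F$ is the Frobenius norm. $d_{\mathbb{P}}(v,v')=\arccos(|\langle v,v'\rangle|/(\|v\|\|v'\|))$. For $v\ne0$, $T_v=v^\perp$, $P_{v^\perp}$ the orthogonal projection onto $T_v$, $A_{\lambda,v}=P_{v^\perp}(A-\lambda\mathrm{Id})|_{T_v}$, and $\mu(A,\lambda,v)=\|A\|_F\|A_{\lambda,v}^{-1}\|$ (operator norm; $\infty$ if not invertible). *)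

From mathcomp Require Import all_boot all_order all_algebra.
From mathcomp Require Import all_classical all_reals all_analysis.
From mathcomp Require Import complex.
Set Implicit Arguments. Unset Strict Implicit. Unset Printing Implicit Defensive.
Import Order.TTheory GRing.Theory Num.Theory.
Local Open Scope ring_scope.

Section Defs.
Variable R : realType.
Variable n : nat.
Local Notation C := (R[i]).

Definition absC (z : C) : R := Normc.normc z.

Definition inner (v w : 'cV[C]_n) : C := \sum_i (conjc (v i 0)) * w i 0.

Definition vnorm (v : 'cV[C]_n) : R := Num.sqrt (\sum_i absC (v i 0) ^+ 2).

Definition frob (A : 'M[C]_n) : R := Num.sqrt (\sum_i \sum_j absC (A i j) ^+ 2).

Definition dP (v v' : 'cV[C]_n) : R := acos (absC (inner v v') / (vnorm v * vnorm v')).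

Definition inT (v w : 'cV[C]_n) : Prop := inner v w = 0.

Definition projperp (v w : 'cV[C]_n) : 'cV[C]_n := w - (inner v w / inner v v) *: v.

Definition Alv (A : 'M[C]_n) (lam : C) (v w : 'cV[C]_n) : 'cV[C]_n :=
  projperp v ((A - lam%:M) *m w).

Definition Alv_invertible (A : 'M[C]_n) (lam : C) (v : 'cV[C]_n) : Prop :=
  (forall w, inT v w -> Alv A lam v w = 0 -> w = 0) /\
  (forall y, inT v y -> exists2 w, inT v w & Alv A lam v w = y).

(* operator norm of the inverse of A_{lambda,v}:
   sup { |A_{lambda,v}^{-1} y| : y in T_v, |y| <= 1 }, where the inverse image of y
   is the (unique, when invertible) w in T_v with A_{lambda,v} w = y *)
Definition Alv_inv_opnorm (A : 'M[C]_n) (lam : C) (v : 'cV[C]_n) : \bar R :=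
  ereal_sup [set (vnorm w)%:E | w in
     [set w | inT v w /\ exists y, [/\ inT v y, vnorm y <= 1 & Alv A lam v w = y]]].

Definition mu (A : 'M[C]_n) (lam : C) (v : 'cV[C]_n) : \bar R :=
  if `[< Alv_invertible A lam v >] then ((frob A)%:E * Alv_inv_opnorm A lam v)%E
  else +oo%E.

End Defs.

From mathcomp Require Import all_boot all_order all_algebra.
From mathcomp Require Import all_classical all_reals all_analysis.
From mathcomp Require Import complex.
From mathcomp Require Import ring lra.
Import Order.TTheory GRing.Theory Num.Theory numFieldNormedType.Exports.
Set Implicit Arguments. Unset Strict Implicit. Unset Printing Implicit Defensive.
Local Open Scope ring_scope.

(* For [w] orthogonal to [v'], projecting onto [v^perp] shrinks [w] at most by the
   factor [1 - sin^2 theta], theta the angle between [v] and [v'] (and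
   [sin theta <= d_P(v', v)]), while [A_{lam,v}] applied to the projection differs
   from [A'_{lam',v'} w] by at most [d |w|], with [d] of the order of
   [|A' - A|_F + |lam' - lam| + sin theta].  With [M := |A_{lam,v}^-1|] this gives
   [|w| <= M / (1 - sin^2 theta - M d) |A'_{lam',v'} w|], so [A'_{lam',v'}] is
   invertible and [mu(A',lam',v') <= (1 + eps) mu(A,lam,v)].  Exchanging the roles,
   now with the bound on [mu(A',lam',v')] just obtained, gives the other inequality.
   Since [|A|_F = 1] forces [mu(A,lam,v) >= 1/2] (when [v^perp <> 0]), the
   hypothesis makes every perturbation term small enough for the numerical
   constants. *)

(** * Complex modulus and the Cauchy-Schwarz inequality *)

Section ComplexModulus.
Variable R : realType.
Implicit Types z : R[i].

Lemma absC_ge0 z : 0 <= absC z.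
Proof. by case: z => a b; rewrite /absC /= sqrtr_ge0. Qed.

Lemma absC_normr z : ((absC z)%:C)%C = `|z|.
Proof. by rewrite normc_def; case: z. Qed.

Lemma absC_sqrE z : (((absC z) ^+ 2)%:C)%C = z * conjc z.
Proof. by rewrite rmorphXn /= absC_normr sqr_normc. Qed.

Lemma absCM z1 z2 : absC (z1 * z2) = absC z1 * absC z2.
Proof. exact: Normc.normcM. Qed.

Lemma ler_absCD z1 z2 : absC (z1 + z2) <= absC z1 + absC z2.
Proof. exact: le_normcD. Qed.

Lemma absCN z : absC (- z) = absC z.
Proof. exact: normcN. Qed.

Lemma absC0 : absC (0 : R[i]) = 0.
Proof. exact: Normc.normc0. Qed.

Lemma absC_eq0 z : absC z = 0 -> z = 0.
Proof. exact: Normc.eq0_normc. Qed.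

Lemma absCJ z : absC (conjc z) = absC z.
Proof. by apply: (@complexI R); rewrite !absC_normr normcJ. Qed.

Lemma absCV z : absC z^-1 = (absC z)^-1.
Proof. exact: Normc.normcV. Qed.

Lemma absC_real (r : R) : absC ((r%:C)%C) = `|r|.
Proof. by rewrite /absC /= expr0n /= addr0 sqrtr_sqr. Qed.

Lemma ler_absC_sum (I : finType) (F : I -> R[i]) :
  absC (\sum_i F i) <= \sum_i absC (F i).
Proof.
apply: (big_rec2 (fun x y => absC x <= y)); first by rewrite absC0.
by move=> i y1 y2 _ h; apply: le_trans (ler_absCD _ _) _; rewrite lerD2l.
Qed.

End ComplexModulus.

Section CauchySchwarz.
Variable R : rcfType.

Lemma cauchy_schwarz (I : finType) (a b : I -> R) :
  (\sum_i a i * b i) ^+ 2 <= (\sum_i a i ^+ 2) * (\sum_i b i ^+ 2).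
Proof.
set P := \sum_i a i * b i; set A := \sum_i a i ^+ 2; set B := \sum_i b i ^+ 2.
have B_ge0 : 0 <= B by apply: sumr_ge0 => i _; exact: sqr_ge0.
have [B0|B_neq0] := eqVneq B 0.
  have b0 i : b i = 0.
    move/eqP: B0; rewrite psumr_eq0 => [|j _]; last exact: sqr_ge0.
    by move=> /allP /(_ i (mem_index_enum _)) /implyP /(_ isT); rewrite sqrf_eq0 => /eqP.
  have -> : P = 0 by rewrite /P big1 // => i _; rewrite b0 mulr0.
  by rewrite B0 mulr0 expr0n.
have B_gt0 : 0 < B by rewrite lt_def B_neq0 B_ge0.
have : 0 <= \sum_i (a i * B - b i * P) ^+ 2 by apply: sumr_ge0 => i _; exact: sqr_ge0.
have -> : \sum_i (a i * B - b i * P) ^+ 2 = B * (A * B - P ^+ 2).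
  transitivity (\sum_i (a i ^+ 2 * B ^+ 2 - (a i * b i) * (2 * B * P) + b i ^+ 2 * P ^+ 2)).
    by apply: eq_bigr => i _; ring.
  rewrite big_split /= sumrB -!mulr_suml -/A -/B -/P; ring.
by rewrite pmulr_rge0 // subr_ge0 mulrC.
Qed.

Lemma cauchy_schwarz_sqrt (I : finType) (a b : I -> R) :
  \sum_i a i * b i <= Num.sqrt (\sum_i a i ^+ 2) * Num.sqrt (\sum_i b i ^+ 2).
Proof.
have [P_le0|P_gt0] := lerP (\sum_i a i * b i) 0.
  by apply: le_trans P_le0 _; rewrite mulr_ge0 ?sqrtr_ge0.
rewrite -sqrtrM; last by apply: sumr_ge0 => i _; exact: sqr_ge0.
rewrite -(ger0_norm (ltW P_gt0)) -sqrtr_sqr; apply: ler_wsqrtr; exact: cauchy_schwarz.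
Qed.

End CauchySchwarz.

Lemma sin_le_id (R : realType) (x : R) : 0 <= x -> sin x <= x.
Proof.
move=> x_ge0.
have [z _] := MVT_segment x_ge0 (fun z _ => is_derive_sin z)
  (continuous_subspaceT (@continuous_sin R)).
by rewrite sin0 !subr0 => ->; rewrite ler_piMl // cos_le1.
Qed.

Lemma ereal_fin_ge0 (R : realDomainType) (x : \bar R) (r : R) :
  (0 <= x)%E -> (x <= r%:E)%E -> exists2 M, 0 <= M & x = M%:E.
Proof. by case: x => [M| |] //= M_ge0 _; exists M. Qed.

(* [a + b + s (2 + b)] bounds the defect of the comparison from [A, v] to [A', v'];
   the backward one pays [s (s (2 + b) + a + b)] more because [v'] is not an
   eigenvector of [A'].  One constant serves both directions. *)
Definition perturb_const (R : numDomainType) (a b s : R) :=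
  a + b + 2 * s + s * (s * (2 + b) + a + b).

Lemma perturb_margin (R : realFieldType) (e M K a b s th : R) :
  0 < e -> e <= 37 / 100 -> 1 <= 2 * M -> 0 <= a -> 0 <= b -> 0 <= s -> s <= th ->
  M * (a + b + th) <= e / (72 / 10) -> 0 <= K -> K <= (1 + e) * M ->
  0 < 1 - s ^+ 2 - K * perturb_const a b s /\
  1 <= (1 + e) * (1 - s ^+ 2 - K * perturb_const a b s).
Proof.
move=> e_gt0 e_le M_ge a_ge0 b_ge0 s_ge0 s_le close K_ge0 K_le.
set S := a + b + th in close; set x := M * S in close.
have S_ge0 : 0 <= S by rewrite /S; lra.
have S_le : S <= 2 * x by rewrite /x mulrA; have := ler_wpM2r S_ge0 M_ge; lra.
have x_ge0 : 0 <= x by lra.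
have S_le9 : S <= 1 / 9 by lra.
have ss_le : s ^+ 2 <= (2 / 9) * x.
  have : s * s <= S * S by apply: ler_pM => //; rewrite /S; lra.
  have : S * S <= (1 / 9) * (2 * x) by apply: ler_pM.
  by rewrite expr2; lra.
have inner_le : s * (2 + b) + a + b <= 19 / 81.
  have : s * (2 + b) <= s * (2 + 1 / 9) by apply: ler_wpM2l => //; rewrite /S in S_le9; lra.
  by rewrite /S in S_le9; lra.
have d_le : perturb_const a b s <= (181 / 81) * S.
  have : s * (s * (2 + b) + a + b) <= th * (19 / 81).
    by apply: ler_pM => //; rewrite ?addr_ge0 ?mulr_ge0 //; lra.
  by rewrite /perturb_const /S; lra.
have d_ge0 : 0 <= perturb_const a b s.
  by rewrite /perturb_const !addr_ge0 ?mulr_ge0 ?addr_ge0 ?mulr_ge0 //; lra.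
have Kd_le : K * perturb_const a b s <= (1 + e) * ((181 / 81) * x).
  apply: le_trans (ler_wpM2r d_ge0 K_le) _; rewrite -[_ * M * _]mulrA.
  apply: ler_wpM2l; first lra.
  by rewrite /x mulrCA; apply: ler_wpM2l => //; lra.
have ex_le : (1 + e) * x <= (1 + e) * (e / (72 / 10)) by apply: ler_wpM2l => //; lra.
have : (1 + e) * ((1 + e) * x) <= (1 + e) * ((1 + e) * (e / (72 / 10))).
  by apply: ler_wpM2l => //; lra.
have e_gap : 0 <= e * (37 / 100 - e) by apply: mulr_ge0; lra.
have : 0 <= e * (e * (37 / 100 - e)) by apply: mulr_ge0 => //; lra.
split; first lra.
have : 1 - (2 / 9) * x - (1 + e) * ((181 / 81) * x) <=
  1 - s ^+ 2 - K * perturb_const a b s by lra.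
have e1_ge0 : 0 <= 1 + e by lra.
by move/(ler_wpM2l e1_ge0); lra.
Qed.

Section ConditionNumber.
Variables (R : realType) (n : nat).
Local Notation C := (R[i]).
Local Notation V := ('cV[C]_n).
Implicit Types (v w x y : V) (c lam : C) (A : 'M[C]_n).

Lemma innerDr v w1 w2 : inner v (w1 + w2) = inner v w1 + inner v w2.
Proof. by rewrite /inner -big_split; apply: eq_bigr => i _; rewrite mxE mulrDr. Qed.

Lemma innerZr v c w : inner v (c *: w) = c * inner v w.
Proof. by rewrite /inner mulr_sumr; apply: eq_bigr => i _; rewrite mxE mulrCA. Qed.

Lemma innerNr v w : inner v (- w) = - inner v w.
Proof. by rewrite /inner -sumrN; apply: eq_bigr => i _; rewrite mxE mulrN. Qed.

Lemma innerBr v w1 w2 : inner v (w1 - w2) = inner v w1 - inner v w2.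
Proof. by rewrite innerDr innerNr. Qed.

Lemma innerDl v1 v2 w : inner (v1 + v2) w = inner v1 w + inner v2 w.
Proof. by rewrite /inner -big_split; apply: eq_bigr => i _; rewrite mxE rmorphD mulrDl. Qed.

Lemma innerZl c v w : inner (c *: v) w = conjc c * inner v w.
Proof. by rewrite /inner mulr_sumr; apply: eq_bigr => i _; rewrite mxE rmorphM mulrA. Qed.

Lemma innerNl v w : inner (- v) w = - inner v w.
Proof. by rewrite /inner -sumrN; apply: eq_bigr => i _; rewrite mxE rmorphN mulNr. Qed.

Lemma innerBl v1 v2 w : inner (v1 - v2) w = inner v1 w - inner v2 w.
Proof. by rewrite innerDl innerNl. Qed.

Lemma innerC v w : inner w v = conjc (inner v w).
Proof.
rewrite /inner rmorph_sum; apply: eq_bigr => i _.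
by rewrite rmorphM /= conjcK mulrC.
Qed.

Lemma inner0r v : inner v 0 = 0.
Proof. by rewrite /inner big1 // => i _; rewrite mxE mulr0. Qed.

Lemma vnorm_ge0 v : 0 <= vnorm v.
Proof. exact: sqrtr_ge0. Qed.

Lemma vnorm_sqrE v : vnorm v ^+ 2 = \sum_i absC (v i 0) ^+ 2.
Proof. by rewrite /vnorm sqr_sqrtr // sumr_ge0 // => i _; rewrite sqr_ge0. Qed.

Lemma inner_self v : inner v v = ((vnorm v ^+ 2)%:C)%C.
Proof.
rewrite vnorm_sqrE rmorph_sum; apply: eq_bigr => i _.
by rewrite mulrC; exact/esym/absC_sqrE.
Qed.

Lemma absC_inner_self v : absC (inner v v) = vnorm v ^+ 2.
Proof. by rewrite inner_self absC_real ger0_norm // sqr_ge0. Qed.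

Lemma vnorm0 : vnorm (0 : V) = 0.
Proof. by rewrite /vnorm big1 ?sqrtr0 // => i _; rewrite mxE absC0 expr0n. Qed.

Lemma vnorm_eq0 v : vnorm v = 0 -> v = 0.
Proof.
move=> /eqP; rewrite sqrtr_eq0 => h.
have {h} : \sum_i absC (v i 0) ^+ 2 == 0.
  by rewrite eq_le h sumr_ge0 // => i _; rewrite sqr_ge0.
rewrite psumr_eq0 => [/allP vi0|i _]; last by rewrite sqr_ge0.
apply/matrixP => i j; rewrite (ord1 j) mxE.
by move: (vi0 i (mem_index_enum _)); rewrite sqrf_eq0 => /eqP /absC_eq0.
Qed.

Lemma vnorm_gt0 v : v != 0 -> 0 < vnorm v.
Proof. by move=> v0; rewrite lt_def vnorm_ge0 andbT; apply: contra v0 => /eqP /vnorm_eq0 ->. Qed.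

Lemma inner_self_neq0 v : v != 0 -> inner v v != 0.
Proof.
move=> v0; apply: contra v0 => /eqP vv0; apply/eqP/vnorm_eq0.
by apply/eqP; rewrite -sqrf_eq0 -absC_inner_self vv0 absC0.
Qed.

Lemma vnormZ c v : vnorm (c *: v) = absC c * vnorm v.
Proof.
rewrite /vnorm (eq_bigr (fun i => absC c ^+ 2 * absC (v i 0) ^+ 2)); last first.
  by move=> i _; rewrite mxE absCM exprMn.
by rewrite -mulr_sumr sqrtrM ?sqr_ge0 // sqrtr_sqr ger0_norm ?absC_ge0.
Qed.

Lemma vnormN v : vnorm (- v) = vnorm v.
Proof. by rewrite -scaleN1r vnormZ absCN (absC_real 1) normr1 mul1r. Qed.

Lemma cauchy_schwarz_inner v w : absC (inner v w) <= vnorm v * vnorm w.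
Proof.
apply: le_trans (ler_absC_sum _) _.
under eq_bigr => i _ do rewrite absCM absCJ.
exact: cauchy_schwarz_sqrt.
Qed.

Lemma ler_vnormD v w : vnorm (v + w) <= vnorm v + vnorm w.
Proof.
rewrite -ler_sqr ?nnegrE ?addr_ge0 ?vnorm_ge0 // vnorm_sqrE.
apply: le_trans (_ : \sum_i (absC (v i 0) + absC (w i 0)) ^+ 2 <= _).
  apply: ler_sum => i _; rewrite mxE ler_sqr ?nnegrE ?addr_ge0 ?absC_ge0 //.
  exact: ler_absCD.
rewrite (eq_bigr (fun i => absC (v i 0) ^+ 2 + 2 * (absC (v i 0) * absC (w i 0))
   + absC (w i 0) ^+ 2)); last by move=> i _; ring.
rewrite !big_split /= -mulr_sumr -!vnorm_sqrE.
have := cauchy_schwarz_sqrt (fun i => absC (v i 0)) (fun i => absC (w i 0)).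
rewrite /= -/(vnorm v) -/(vnorm w) => cs.
have := vnorm_ge0 v; have := vnorm_ge0 w; nra.
Qed.

Lemma ler_vnormB v w : vnorm (v - w) <= vnorm v + vnorm w.
Proof. by rewrite -(vnormN w) ler_vnormD. Qed.

Lemma frob_ge0 (M : 'M[C]_n) : 0 <= frob M.
Proof. exact: sqrtr_ge0. Qed.

Lemma frob_eq0 (M : 'M[C]_n) : frob M = 0 -> M = 0.
Proof.
move=> /eqP; rewrite sqrtr_eq0 => h.
have {h} : \sum_i \sum_j absC (M i j) ^+ 2 == 0.
  by rewrite eq_le h sumr_ge0 // => i _; rewrite sumr_ge0 // => j _; rewrite sqr_ge0.
rewrite psumr_eq0 => [/allP Mi0|i _]; last by rewrite sumr_ge0 // => j _; rewrite sqr_ge0.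
apply/matrixP => i j; rewrite mxE.
move: (Mi0 i (mem_index_enum _)); rewrite psumr_eq0 => [/allP Mij0|k _]; last by rewrite sqr_ge0.
by move: (Mij0 j (mem_index_enum _)); rewrite sqrf_eq0 => /eqP /absC_eq0.
Qed.

Lemma frob_subC (M N : 'M[C]_n) : frob (M - N) = frob (N - M).
Proof.
rewrite /frob; congr Num.sqrt; apply: eq_bigr => i _; apply: eq_bigr => j _.
by rewrite !mxE -absCN opprB.
Qed.

Lemma ler_vnorm_mulmx (M : 'M[C]_n) v : vnorm (M *m v) <= frob M * vnorm v.
Proof.
rewrite -ler_sqr ?nnegrE ?mulr_ge0 ?frob_ge0 ?vnorm_ge0 // vnorm_sqrE exprMn.
rewrite /frob sqr_sqrtr; last first.
  by rewrite sumr_ge0 // => i _; rewrite sumr_ge0 // => j _; rewrite sqr_ge0.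
rewrite mulr_suml; apply: ler_sum => i _; rewrite mxE.
have row_cs : absC (\sum_j M i j * v j 0) <=
    Num.sqrt (\sum_j absC (M i j) ^+ 2) * vnorm v.
  apply: le_trans (ler_absC_sum _) _.
  under eq_bigr => j _ do rewrite absCM.
  exact: cauchy_schwarz_sqrt.
have := lerXn2r 2 (absC_ge0 _) (mulr_ge0 (sqrtr_ge0 _) (vnorm_ge0 _)) row_cs.
by rewrite exprMn sqr_sqrtr // sumr_ge0 // => j _; rewrite sqr_ge0.
Qed.
(** * Orthogonal projection onto [v^perp] *)

Lemma inner_projperp v y : v != 0 -> inner v (projperp v y) = 0.
Proof.
by move=> v0; rewrite /projperp innerBr innerZr divfK ?subrr ?inner_self_neq0.
Qed.

Lemma projperpD v y1 y2 : projperp v (y1 + y2) = projperp v y1 + projperp v y2.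
Proof. by rewrite /projperp innerDr mulrDl scalerDl opprD addrACA. Qed.

Lemma projperpZ v c y : projperp v (c *: y) = c *: projperp v y.
Proof. by rewrite /projperp innerZr scalerBr scalerA mulrA. Qed.

Lemma projperp_id v y : inner v y = 0 -> projperp v y = y.
Proof. by move=> vy; rewrite /projperp vy mul0r scale0r subr0. Qed.

Lemma projperp_decomp v y : y = projperp v y + (inner v y / inner v v) *: v.
Proof. by rewrite /projperp subrK. Qed.

Lemma absC_coordE v y : v != 0 ->
  absC (inner v y / inner v v) * vnorm v = absC (inner v y) / vnorm v.
Proof.
move=> v0; rewrite absCM absCV absC_inner_self.
by field; rewrite gt_eqF ?vnorm_gt0.
Qed.

Lemma absC_coord_le v y : v != 0 -> absC (inner v y / inner v v) * vnorm v <= vnorm y.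
Proof.
move=> v0; rewrite absC_coordE // ler_pdivrMr ?vnorm_gt0 //.
by rewrite mulrC cauchy_schwarz_inner.
Qed.

Lemma pythagoras x y : inner x y = 0 ->
  vnorm (x + y) ^+ 2 = vnorm x ^+ 2 + vnorm y ^+ 2.
Proof.
move=> xy; apply: (@complexI R); rewrite rmorphD /= -!inner_self.
by rewrite innerDl !innerDr xy (innerC x y) xy conjc0 !addr0 add0r.
Qed.

Lemma vnorm_projperp_sqr v y : v != 0 ->
  vnorm (projperp v y) ^+ 2 + absC (inner v y) ^+ 2 / vnorm v ^+ 2 = vnorm y ^+ 2.
Proof.
move=> v0; rewrite [in RHS](projperp_decomp v y) pythagoras; last first.
  by rewrite innerZr (innerC v (projperp v y)) inner_projperp // conjc0 mulr0.
rewrite vnormZ absCM absCV absC_inner_self; congr (_ + _).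
by field; rewrite gt_eqF ?vnorm_gt0.
Qed.

Lemma ler_vnorm_projperp v y : v != 0 -> vnorm (projperp v y) <= vnorm y.
Proof.
move=> v0; rewrite -ler_sqr ?nnegrE ?vnorm_ge0 // -(vnorm_projperp_sqr y v0) lerDl.
by rewrite divr_ge0 ?sqr_ge0.
Qed.

Definition pcos v v' := absC (inner v v') / (vnorm v * vnorm v').
Definition psin v v' := Num.sqrt (1 - pcos v v' ^+ 2).

Lemma pcosC v v' : pcos v v' = pcos v' v.
Proof. by rewrite /pcos innerC absCJ [vnorm v * _]mulrC. Qed.

Lemma psinC v v' : psin v v' = psin v' v.
Proof. by rewrite /psin pcosC. Qed.

Lemma pcos_ge0 v v' : 0 <= pcos v v'.
Proof. by rewrite /pcos divr_ge0 ?absC_ge0 ?mulr_ge0 ?vnorm_ge0. Qed.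

Lemma pcos_le1 v v' : v != 0 -> v' != 0 -> pcos v v' <= 1.
Proof.
move=> v0 v'0; rewrite /pcos ler_pdivrMr ?mul1r ?cauchy_schwarz_inner //.
by rewrite mulr_gt0 ?vnorm_gt0.
Qed.

Lemma psin_ge0 v v' : 0 <= psin v v'.
Proof. exact: sqrtr_ge0. Qed.

Lemma psin_sqrE v v' : v != 0 -> v' != 0 -> psin v v' ^+ 2 = 1 - pcos v v' ^+ 2.
Proof.
move=> v0 v'0; rewrite /psin sqr_sqrtr // subr_ge0.
by rewrite expr_le1 ?pcos_ge0 ?pcos_le1.
Qed.

Lemma psin_le1 v v' : v != 0 -> v' != 0 -> psin v v' <= 1.
Proof.
move=> v0 v'0; rewrite -ler_sqr ?nnegrE ?psin_ge0 // psin_sqrE // expr1n.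
by rewrite lerBlDr lerDl sqr_ge0.
Qed.

Lemma psin_le_dP v v' : v != 0 -> v' != 0 -> psin v v' <= dP v' v.
Proof.
move=> v0 v'0; rewrite /dP -/(pcos v' v) -pcosC.
have cos_ge0 := pcos_ge0 v v'; have cos_le1 := pcos_le1 v0 v'0.
have cos_itv : -1 <= pcos v v' <= 1 by rewrite cos_le1 andbT (le_trans _ cos_ge0) // lerN10.
by rewrite /psin -sin_acos //; apply: sin_le_id; exact: acos_ge0.
Qed.

Lemma vnorm_projperp v v' : v != 0 -> v' != 0 ->
  vnorm (projperp v v') = psin v v' * vnorm v'.
Proof.
move=> v0 v'0; apply/eqP; rewrite -(@eqrXn2 _ 2) ?mulr_ge0 ?psin_ge0 ?vnorm_ge0 //.
apply/eqP; rewrite exprMn psin_sqrE // /pcos.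
rewrite -[LHS](addrK (absC (inner v v') ^+ 2 / vnorm v ^+ 2)) vnorm_projperp_sqr //.
have := vnorm_gt0 v0; have := vnorm_gt0 v'0.
by move=> v'_gt0 v_gt0; field; rewrite !gt_eqF.
Qed.

Lemma absC_inner_orth v v' w : v != 0 -> v' != 0 -> inner v w = 0 ->
  absC (inner v' w) <= psin v v' * vnorm v' * vnorm w.
Proof.
move=> v0 v'0 vw.
have -> : inner v' w = inner (projperp v v') w.
  by rewrite /projperp innerBl innerZl vw mulr0 subr0.
by apply: le_trans (cauchy_schwarz_inner _ _) _; rewrite vnorm_projperp.
Qed.

Lemma vnorm_projperp_ge v v' w : v != 0 -> v' != 0 -> inner v' w = 0 ->
  (1 - psin v v' ^+ 2) * vnorm w <= vnorm (projperp v w).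
Proof.
move=> v0 v'0 v'w.
have s_ge0 := psin_ge0 v v'; have s_le1 := psin_le1 v0 v'0.
have ss_le1 : psin v v' ^+ 2 <= 1 by rewrite expr_le1.
have w_ge0 := vnorm_ge0 w; have v_gt0 := vnorm_gt0 v0.
rewrite -ler_sqr ?nnegrE ?mulr_ge0 ?subr_ge0 ?vnorm_ge0 //.
rewrite -[X in _ <= X](addrK (absC (inner v w) ^+ 2 / vnorm v ^+ 2)).
rewrite vnorm_projperp_sqr //.
have inner_le : absC (inner v w) ^+ 2 / vnorm v ^+ 2 <= psin v v' ^+ 2 * vnorm w ^+ 2.
  rewrite ler_pdivrMr ?exprn_gt0 //.
  have := absC_inner_orth v'0 v0 v'w; rewrite psinC => h.
  have := lerXn2r 2 (absC_ge0 _) (mulr_ge0 (mulr_ge0 s_ge0 (vnorm_ge0 v)) w_ge0) h.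
  by rewrite !exprMn mulrAC.
have : (1 - psin v v' ^+ 2) ^+ 2 <= 1 - psin v v' ^+ 2.
  by rewrite expr2 ler_piMl ?subr_ge0 // lerBlDr lerDl sqr_ge0.
have := sqr_ge0 (vnorm w); rewrite exprMn; nra.
Qed.

(** * The restricted operator [A_{lam,v}] *)

Lemma AlvE A lam v w : Alv A lam v w = projperp v (A *m w - lam *: w).
Proof. by rewrite /Alv mulmxBl mul_scalar_mx. Qed.

Lemma AlvZ A lam v c w : Alv A lam v (c *: w) = c *: Alv A lam v w.
Proof. by rewrite !AlvE -projperpZ scalerBr scalerA mulrC -scalerA -scalemxAr. Qed.

Lemma AlvD A lam v w1 w2 : Alv A lam v (w1 + w2) = Alv A lam v w1 + Alv A lam v w2.
Proof. by rewrite !AlvE -projperpD mulmxDr scalerDr opprD addrACA. Qed.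

Lemma AlvB A lam v w1 w2 : Alv A lam v (w1 - w2) = Alv A lam v w1 - Alv A lam v w2.
Proof. by rewrite -scaleN1r AlvD AlvZ scaleN1r. Qed.

Lemma Alv0 A lam v : Alv A lam v 0 = 0.
Proof. by rewrite AlvE mulmx0 scaler0 subrr /projperp inner0r mul0r scale0r subrr. Qed.

Lemma inner_Alv A lam v w : v != 0 -> inner v (Alv A lam v w) = 0.
Proof. by move=> v0; rewrite AlvE inner_projperp. Qed.

Lemma Alv_projperp A lam v w : A *m v = lam *: v ->
  Alv A lam v (projperp v w) = Alv A lam v w.
Proof.
move=> eig; rewrite {1}/projperp AlvB AlvZ (AlvE A lam v v) eig subrr.
by rewrite /projperp inner0r mul0r scale0r subrr scaler0 subr0.
Qed.

Lemma mulmx_shiftD A A' lam lam' w : A' *m w - lam' *: w =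
  (A *m w - lam *: w) + ((A' - A) *m w - (lam' - lam) *: w).
Proof. by rewrite mulmxBl scalerBl; apply/matrixP => i j; rewrite !mxE; ring. Qed.

Lemma mulmx_shift_lin A lam x y c : A *m (x + c *: y) - lam *: (x + c *: y) =
  (A *m x - lam *: x) + c *: (A *m y - lam *: y).
Proof.
rewrite mulmxDr -scalemxAr scalerDr scalerBr scalerA [lam * c]mulrC -scalerA.
by rewrite opprD addrACA.
Qed.

Lemma ler_vnorm_shift A lam w :
  vnorm (A *m w - lam *: w) <= (frob A + absC lam) * vnorm w.
Proof.
apply: le_trans (ler_vnormB _ _) _; rewrite vnormZ mulrDl lerD2r.
exact: ler_vnorm_mulmx.
Qed.

Lemma absC_eigen_le A lam v : A *m v = lam *: v -> v != 0 -> absC lam <= frob A.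
Proof.
move=> eig v0; have := ler_vnorm_mulmx A v.
by rewrite eig vnormZ ler_pM2r // vnorm_gt0.
Qed.

Lemma ler_vnorm_Alv A lam v w : A *m v = lam *: v -> v != 0 ->
  vnorm (Alv A lam v w) <= 2 * frob A * vnorm w.
Proof.
move=> eig v0; rewrite AlvE; apply: le_trans (ler_vnorm_projperp _ v0) _.
apply: le_trans (ler_vnorm_shift _ _ _) _; rewrite ler_wpM2r ?vnorm_ge0 //.
by have := absC_eigen_le eig v0; lra.
Qed.

Lemma vnorm_projperp_swap v1 v2 y : v1 != 0 -> v2 != 0 ->
  vnorm (projperp v2 y) <= vnorm (projperp v1 y) + psin v1 v2 * vnorm y.
Proof.
move=> v1_0 v2_0.
rewrite {1}(projperp_decomp v1 y) projperpD projperpZ.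
apply: le_trans (ler_vnormD _ _) _; apply: lerD; first exact: ler_vnorm_projperp.
rewrite vnormZ vnorm_projperp // psinC mulrCA.
by rewrite ler_wpM2l ?psin_ge0 ?absC_coord_le.
Qed.

Lemma vnorm_Alv_perturb A1 A2 l1 l2 v1 v2 w : v1 != 0 -> v2 != 0 ->
  vnorm (Alv A2 l2 v2 w) <= vnorm (Alv A1 l1 v1 w)
    + psin v1 v2 * vnorm (A1 *m w - l1 *: w) + (frob (A2 - A1) + absC (l2 - l1)) * vnorm w.
Proof.
move=> v1_0 v2_0; rewrite (AlvE A2) (mulmx_shiftD A1 _ l1) projperpD.
apply: le_trans (ler_vnormD _ _) _; apply: lerD.
  by rewrite AlvE; exact: vnorm_projperp_swap.
exact: le_trans (ler_vnorm_projperp _ v2_0) (ler_vnorm_shift _ _ _).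
Qed.

Lemma vnorm_Alv_perturb_self A A' lam lam' v v' :
  A *m v = lam *: v -> v != 0 -> v' != 0 ->
  vnorm (Alv A' lam' v' v') <= (psin v v' * (frob A' + absC lam') + frob (A' - A)
    + absC (lam' - lam)) * vnorm v'.
Proof.
move=> eig v0 v'0; rewrite AlvE; apply: le_trans (ler_vnorm_projperp _ v'0) _.
set g := inner v v' / inner v v.
have -> : A' *m v' - lam' *: v' =
    (A' *m projperp v v' - lam' *: projperp v v') + g *: ((A' - A) *m v - (lam' - lam) *: v).
  have -> : (A' - A) *m v - (lam' - lam) *: v = A' *m v - lam' *: v.
    by rewrite [RHS](mulmx_shiftD A _ lam) eig subrr add0r.
  by rewrite {1 2}(projperp_decomp v v') mulmx_shift_lin.
apply: le_trans (ler_vnormD _ _) _; rewrite vnormZ mulrDl mulrDl -addrA.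
apply: lerD.
  rewrite (mulrC (psin v v')) -mulrA -vnorm_projperp //.
  exact: ler_vnorm_shift.
have g_le : absC g * vnorm v <= vnorm v' by exact: absC_coord_le.
rewrite -mulrDl; apply: le_trans (ler_wpM2l (absC_ge0 g) (ler_vnorm_shift _ _ _)) _.
by rewrite mulrCA ler_wpM2l ?addr_ge0 ?frob_ge0 ?absC_ge0.
Qed.

Definition vstar v : 'rV[C]_n := (map_mx conjc v)^T.

Lemma innerE v w : inner v w = (vstar v *m w) 0 0.
Proof. by rewrite /inner !mxE; apply: eq_bigr => i _; rewrite !mxE. Qed.

Lemma mulmx_vstar v w : v *m (vstar v *m w) = inner v w *: v.
Proof. by rewrite [vstar v *m w]mx11_scalar mul_mx_scalar -innerE. Qed.

Definition projperp_mx v : 'M[C]_n := 1%:M - (inner v v)^-1 *: (v *m vstar v).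

Lemma projperp_mxE v w : projperp v w = projperp_mx v *m w.
Proof.
rewrite /projperp_mx mulmxBl mul1mx -scalemxAl -mulmxA mulmx_vstar scalerA.
by rewrite /projperp mulrC.
Qed.

(* The square matrix acting as [A_{lam,v}] on [v^perp] and as the identity on
   [span v]: it is injective as soon as [A_{lam,v}] is, hence invertible. *)
Definition Alv_mx A lam v : 'M[C]_n :=
  projperp_mx v *m (A - lam%:M) *m projperp_mx v + (inner v v)^-1 *: (v *m vstar v).

Lemma Alv_mxE A lam v w : Alv_mx A lam v *m w =
  Alv A lam v (projperp v w) + (inner v w / inner v v) *: v.
Proof.
rewrite /Alv_mx mulmxDl -!mulmxA /Alv !projperp_mxE.
by rewrite -scalemxAl -mulmxA mulmx_vstar scalerA mulrC.
Qed.

Lemma inner_Alv_mx A lam v w : v != 0 -> inner v (Alv_mx A lam v *m w) = inner v w.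
Proof.
move=> v0; rewrite Alv_mxE innerDr inner_Alv // add0r innerZr.
by rewrite divfK // inner_self_neq0.
Qed.

Lemma Alv_surj A lam v : v != 0 ->
  (forall w, inT v w -> Alv A lam v w = 0 -> w = 0) ->
  forall y, inT v y -> exists2 w, inT v w & Alv A lam v w = y.
Proof.
move=> v0 inj.
have mx_inj w : Alv_mx A lam v *m w = 0 -> w = 0.
  move=> Nw0; have vw : inner v w = 0 by rewrite -(inner_Alv_mx A lam w v0) Nw0 inner0r.
  by apply: inj => //; move: Nw0; rewrite Alv_mxE projperp_id // vw mul0r scale0r addr0.
have unit : Alv_mx A lam v \in unitmx.
  rewrite unitmxE unitfE -det_tr; apply/negP => /det0P [r r0 hr].
  have /mx_inj r0' : Alv_mx A lam v *m r^T = 0 by rewrite -[Alv_mx _ _ _]trmxK -trmx_mul hr trmx0.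
  by move: r0; rewrite -[r]trmxK r0' trmx0 eqxx.
move=> y vy; have vw : inner v (invmx (Alv_mx A lam v) *m y) = 0.
  by rewrite -(inner_Alv_mx A lam _ v0) mulKVmx.
exists (invmx (Alv_mx A lam v) *m y) => //.
by have := mulKVmx unit y; rewrite Alv_mxE projperp_id // vw mul0r scale0r addr0.
Qed.

Lemma Alv_inv_opnorm_ge0 A lam v : (0 <= Alv_inv_opnorm A lam v)%E.
Proof.
apply: ereal_sup_ubound; exists 0; last by rewrite vnorm0.
split; first by rewrite /inT inner0r.
by exists 0; rewrite /inT inner0r vnorm0 Alv0 ler01.
Qed.

Lemma Alv_inv_opnorm_le A lam v K : 0 <= K ->
  (forall w, inT v w -> vnorm w <= K * vnorm (Alv A lam v w)) ->
  (Alv_inv_opnorm A lam v <= K%:E)%E.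
Proof.
move=> K_ge0 bound; apply: ge_ereal_sup => _ [w [vw [y [_ y_le1 Awy]]] <-].
by rewrite lee_fin; apply: le_trans (bound w vw) _; rewrite Awy ler_piMr.
Qed.

Lemma vnorm_le_Alv_inv_opnorm A lam v M : v != 0 ->
  (forall w, inT v w -> Alv A lam v w = 0 -> w = 0) ->
  (Alv_inv_opnorm A lam v <= M%:E)%E ->
  forall w, inT v w -> vnorm w <= M * vnorm (Alv A lam v w).
Proof.
move=> v0 inj opM w vw.
have [Aw0|Aw_neq0] := eqVneq (Alv A lam v w) 0.
  by rewrite (inj w vw Aw0) vnorm0 Alv0 vnorm0 mulr0.
have t_gt0 : 0 < vnorm (Alv A lam v w) by exact: vnorm_gt0.
set t := vnorm (Alv A lam v w) in t_gt0 *; set w1 := ((t^-1)%:C)%C *: w.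
have vnormZt x : vnorm (((t^-1)%:C)%C *: x) = t^-1 * vnorm x.
  by rewrite vnormZ absC_real ger0_norm // invr_ge0 ltW.
have Aw1 : vnorm (Alv A lam v w1) = 1 by rewrite AlvZ vnormZt mulVf ?gt_eqF.
have : ((vnorm w1)%:E <= M%:E)%E.
  apply: le_trans opM; apply: ereal_sup_ubound; exists w1 => //.
  split; first by rewrite /inT innerZr vw mulr0.
  by exists (Alv A lam v w1); rewrite Aw1 /inT inner_Alv.
by rewrite lee_fin vnormZt mulrC ler_pdivrMr.
Qed.

Lemma Alv_inv_opnorm_transfer A1 l1 v1 A2 l2 v2 (M d s e : R) :
  v1 != 0 -> v2 != 0 -> psin v1 v2 <= s -> 0 <= e ->
  Alv_invertible A1 l1 v1 -> (Alv_inv_opnorm A1 l1 v1 <= M%:E)%E ->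
  (forall w, inT v2 w ->
     vnorm (Alv A1 l1 v1 (projperp v1 w)) <= vnorm (Alv A2 l2 v2 w) + d * vnorm w) ->
  0 < 1 - s ^+ 2 - M * d -> 1 <= (1 + e) * (1 - s ^+ 2 - M * d) ->
  Alv_invertible A2 l2 v2 /\ (Alv_inv_opnorm A2 l2 v2 <= ((1 + e) * M)%:E)%E.
Proof.
move=> v1_0 v2_0 s_ge e_ge0 [inj1 _] opM close D_gt0 D_ge.
have M_ge0 : 0 <= M by rewrite -lee_fin (le_trans (Alv_inv_opnorm_ge0 _ _ _) opM).
have bound w : inT v2 w -> vnorm w <= (1 + e) * M * vnorm (Alv A2 l2 v2 w).
  move=> v2w; have := vnorm_projperp_ge v1_0 v2_0 v2w.
  have := vnorm_le_Alv_inv_opnorm v1_0 inj1 opM (inner_projperp w v1_0).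
  have := ler_wpM2l M_ge0 (close w v2w).
  have := ler_wpM2r (vnorm_ge0 w) D_ge; have := vnorm_ge0 (Alv A2 l2 v2 w).
  have : psin v1 v2 ^+ 2 * vnorm w <= s ^+ 2 * vnorm w.
    by rewrite ler_wpM2r ?vnorm_ge0 // ler_sqr ?nnegrE ?psin_ge0 // (le_trans (psin_ge0 v1 v2)).
  by nra.
have inj2 w : inT v2 w -> Alv A2 l2 v2 w = 0 -> w = 0.
  move=> v2w Aw0; apply: vnorm_eq0; apply/eqP; rewrite eq_le vnorm_ge0 andbT.
  by have := bound w v2w; rewrite Aw0 vnorm0 mulr0.
split; first by split => //; exact: Alv_surj.
by apply: Alv_inv_opnorm_le => //; rewrite mulr_ge0 // addr_ge0.
Qed.

Lemma Alv_inv_opnorm_ge A lam v M : A *m v = lam *: v -> v != 0 ->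
  (exists2 w, inT v w & w != 0) -> Alv_invertible A lam v ->
  (Alv_inv_opnorm A lam v <= M%:E)%E -> 1 <= 2 * frob A * M.
Proof.
move=> eig v0 [w vw w_neq0] [inj _] opM.
have := vnorm_le_Alv_inv_opnorm v0 inj opM vw.
have := ler_vnorm_Alv w eig v0; have := vnorm_gt0 w_neq0.
have M_ge0 : 0 <= M by rewrite -lee_fin (le_trans (Alv_inv_opnorm_ge0 _ _ _) opM).
by nra.
Qed.

(** * Perturbation of the condition number *)

Lemma mu_ge0 A lam v : (0 <= mu A lam v)%E.
Proof.
rewrite /mu; case: asboolP => // _.
by rewrite mule_ge0 ?lee_fin ?frob_ge0 ?Alv_inv_opnorm_ge0.
Qed.

Lemma muE A lam v : frob A = 1 -> Alv_invertible A lam v ->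
  mu A lam v = Alv_inv_opnorm A lam v.
Proof. by move=> frobA inv; rewrite /mu asboolT // frobA mul1e. Qed.

Lemma mu_invertible A lam v : mu A lam v != +oo%E -> Alv_invertible A lam v.
Proof. by apply: contra_neqP => ninv; rewrite /mu asboolF. Qed.

Lemma mu_trivial A lam v : (forall w, inT v w -> w = 0) -> mu A lam v = 0%E.
Proof.
move=> triv.
have inv : Alv_invertible A lam v.
  split=> [w vw _|y vy]; first exact: triv.
  by exists 0; rewrite ?(triv y vy) ?Alv0 // /inT inner0r.
have op0 : Alv_inv_opnorm A lam v = 0%E.
  apply/eqP; rewrite eq_le Alv_inv_opnorm_ge0 andbT.
  by apply: Alv_inv_opnorm_le => // w vw; rewrite (triv w vw) vnorm0 mul0r.
by rewrite /mu asboolT // op0 mule0.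
Qed.

Lemma inT_trivial v v' : v != 0 -> v' != 0 ->
  (forall w, inT v w -> w = 0) -> forall w, inT v' w -> w = 0.
Proof.
move=> v0 v'0 triv w v'w.
have onto_v y : y = (inner v y / inner v v) *: v.
  by rewrite {1}(projperp_decomp v y) (triv (projperp v y)) ?add0r // /inT inner_projperp.
have g_neq0 : inner v v' / inner v v != 0.
  by apply: contra v'0 => /eqP g0; rewrite (onto_v v') g0 scale0r.
move: v'w; rewrite /inT (onto_v v') (onto_v w) innerZl innerZr => /eqP.
rewrite !mulf_eq0 conjc_eq0 (negbTE g_neq0) invr_eq0 (negbTE (inner_self_neq0 v0)) /= !orbF.
by move=> /eqP wv0; rewrite (onto_v w) wv0 mul0r scale0r.
Qed.

Lemma projperpZl v c y : c != 0 -> v != 0 -> projperp (c *: v) y = projperp v y.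
Proof.
move=> c0 v0; rewrite /projperp !innerZl !innerZr scalerA; congr (_ - _ *: _).
have := inner_self_neq0 v0; have : conjc c != 0 by rewrite conjc_eq0.
by move=> cJ0 vv0; field; rewrite cJ0 vv0 c0.
Qed.

Lemma mu_scale A lam v c : c != 0 -> v != 0 -> mu A lam (c *: v) = mu A lam v.
Proof.
move=> c0 v0.
have inT_cv : inT (c *: v) = inT v.
  apply/funext => w; apply/propext; rewrite /inT innerZl.
  split=> [/eqP|->]; last by rewrite mulr0.
  by rewrite mulf_eq0 conjc_eq0 (negbTE c0) => /eqP.
have Alv_cv : Alv A lam (c *: v) = Alv A lam v.
  by apply/funext => w; rewrite /Alv projperpZl.
by rewrite /mu /Alv_invertible /Alv_inv_opnorm inT_cv Alv_cv.
Qed.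

Lemma mu_perturb0 A A' lam lam' v v' : v != 0 -> v' != 0 ->
  frob (A' - A) + absC (lam' - lam) + dP v' v = 0 -> mu A' lam' v' = mu A lam v.
Proof.
move=> v0 v'0 S0.
have s_ge0 := psin_ge0 v v'; have s_le := psin_le_dP v0 v'0.
have := frob_ge0 (A' - A); have := absC_ge0 (lam' - lam) => b_ge0 a_ge0.
have /frob_eq0/subr0_eq -> : frob (A' - A) = 0 by lra.
have /absC_eq0/subr0_eq -> : absC (lam' - lam) = 0 by lra.
have : vnorm (projperp v v') = 0 by rewrite vnorm_projperp // (_ : psin v v' = 0) ?mul0r //; lra.
move=> /vnorm_eq0 pv0; rewrite (projperp_decomp v v') pv0 add0r mu_scale //.
by apply: contra v'0 => /eqP g0; rewrite (projperp_decomp v v') pv0 g0 scale0r add0r.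
Qed.

Lemma mu_finite A lam v (S c : R) : frob A = 1 -> 0 < S ->
  (mu A lam v * S%:E <= c%:E)%E ->
  Alv_invertible A lam v /\ exists2 M, mu A lam v = M%:E & Alv_inv_opnorm A lam v = M%:E.
Proof.
move=> frobA S_gt0 close.
have [M _ muA] : exists2 M, 0 <= M & mu A lam v = M%:E.
  by apply: (ereal_fin_ge0 (r := c / S) (mu_ge0 _ _ _)); rewrite EFinM lee_pdivlMr.
have invA : Alv_invertible A lam v by apply: mu_invertible; rewrite muA.
by split=> //; exists M; rewrite // -muE.
Qed.

Section Perturbation.
Variables (A A' : 'M[C]_n) (lam lam' : C) (v v' : V).
Hypotheses (frobA : frob A = 1) (frobA' : frob A' = 1) (eig : A *m v = lam *: v)
  (v0 : v != 0) (v'0 : v' != 0).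
Let a := frob (A' - A).
Let b := absC (lam' - lam).
Let s := psin v v'.

Lemma absC_lam'_le : absC lam' <= 1 + b.
Proof.
have := absC_eigen_le eig v0; have := ler_absCD lam (lam' - lam).
by rewrite addrC subrK frobA -/b; lra.
Qed.

Lemma Alv_perturb_fwd w :
  vnorm (Alv A lam v (projperp v w)) <= vnorm (Alv A' lam' v' w) + perturb_const a b s * vnorm w.
Proof.
have a_ge0 : 0 <= a := frob_ge0 _; have b_ge0 : 0 <= b := absC_ge0 _.
have s_ge0 : 0 <= s := psin_ge0 v v'.
rewrite Alv_projperp //; apply: le_trans (vnorm_Alv_perturb A' A lam' lam w v'0 v0) _.
rewrite psinC frob_subC -absCN opprB -/a -/b -/s -addrA lerD2l.
have shift : vnorm (A' *m w - lam' *: w) <= (2 + b) * vnorm w.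
  apply: le_trans (ler_vnorm_shift _ _ _) _; rewrite frobA' ler_wpM2r ?vnorm_ge0 //.
  by have := absC_lam'_le; lra.
have := ler_wpM2l s_ge0 shift; have := vnorm_ge0 w.
have : 0 <= s * (s * (2 + b) + a) * vnorm w.
  by rewrite !mulr_ge0 ?vnorm_ge0 ?addr_ge0 ?mulr_ge0 //; lra.
rewrite /perturb_const; lra.
Qed.

Lemma Alv_perturb_bwd w : inT v w ->
  vnorm (Alv A' lam' v' (projperp v' w)) <= vnorm (Alv A lam v w) + perturb_const a b s * vnorm w.
Proof.
move=> vw.
have a_ge0 : 0 <= a := frob_ge0 _; have b_ge0 : 0 <= b := absC_ge0 _.
have s_ge0 : 0 <= s := psin_ge0 v v'; have w_ge0 := vnorm_ge0 w.
set beta := inner v' w / inner v' v'.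
rewrite {1}/projperp -/beta AlvB AlvZ; apply: le_trans (ler_vnormB _ _) _; rewrite vnormZ.
have shift : s * vnorm (A *m w - lam *: w) <= s * (2 * vnorm w).
  rewrite ler_wpM2l //; apply: le_trans (ler_vnorm_shift _ _ _) _.
  by rewrite frobA ler_wpM2r //; have := absC_eigen_le eig v0; rewrite frobA; lra.
have beta_le : absC beta * vnorm v' <= s * vnorm w.
  rewrite absC_coordE // ler_pdivrMr ?vnorm_gt0 //.
  by rewrite mulrAC absC_inner_orth.
have self := vnorm_Alv_perturb_self A' lam' eig v0 v'0; rewrite frobA' -/a -/b -/s in self.
have self_le : absC beta * vnorm (Alv A' lam' v' v') <=
    s * vnorm w * (s * (2 + b) + a + b).
  apply: le_trans (ler_wpM2l (absC_ge0 _) self) _; rewrite mulrCA mulrC.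
  have K_ge0 : 0 <= s * (1 + absC lam') + a + b.
    by rewrite !addr_ge0 ?mulr_ge0 ?addr_ge0 ?absC_ge0.
  apply: ler_pM => //; first by rewrite mulr_ge0 ?absC_ge0 ?vnorm_ge0.
  by rewrite lerD2r lerD2r ler_wpM2l //; have := absC_lam'_le; lra.
have := vnorm_Alv_perturb A A' lam lam' w v0 v'0; rewrite -/a -/b -/s.
rewrite /perturb_const; lra.
Qed.

Lemma Alv_inv_opnorm_perturb_fwd (M e : R) :
  0 < e -> e <= 37 / 100 -> 1 <= 2 * M -> M * (a + b + dP v' v) <= e / (72 / 10) ->
  Alv_invertible A lam v -> Alv_inv_opnorm A lam v = M%:E ->
  Alv_invertible A' lam' v' /\
  exists2 M', Alv_inv_opnorm A' lam' v' = M'%:E & M' <= (1 + e) * M.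
Proof.
move=> e_gt0 e_le M_ge close invA opA.
have M_ge0 : 0 <= M by lra.
have M_le : M <= (1 + e) * M by rewrite ler_peMl //; lra.
have [D_gt0 D_ge] := perturb_margin e_gt0 e_le M_ge (frob_ge0 _) (absC_ge0 _)
  (psin_ge0 v v') (psin_le_dP v0 v'0) close M_ge0 M_le.
have opA_le : (Alv_inv_opnorm A lam v <= M%:E)%E by rewrite opA.
have [invA' opA'] := Alv_inv_opnorm_transfer v0 v'0 (lexx _) (ltW e_gt0) invA opA_le
  (fun w _ => Alv_perturb_fwd w) D_gt0 D_ge.
split=> //; have [M' _ opA'_eq] := ereal_fin_ge0 (Alv_inv_opnorm_ge0 _ _ _) opA'.
by exists M'; rewrite // -lee_fin -opA'_eq.
Qed.

Lemma Alv_inv_opnorm_perturb_bwd (M M' e : R) :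
  0 < e -> e <= 37 / 100 -> 1 <= 2 * M -> M * (a + b + dP v' v) <= e / (72 / 10) ->
  Alv_inv_opnorm A lam v = M%:E -> Alv_invertible A' lam' v' ->
  Alv_inv_opnorm A' lam' v' = M'%:E -> M' <= (1 + e) * M ->
  M <= (1 + e) * M'.
Proof.
move=> e_gt0 e_le M_ge close opA invA' opA' M'_le.
have M'_ge0 : 0 <= M' by rewrite -lee_fin -opA' Alv_inv_opnorm_ge0.
have [D_gt0 D_ge] := perturb_margin e_gt0 e_le M_ge (frob_ge0 _) (absC_ge0 _)
  (psin_ge0 v v') (psin_le_dP v0 v'0) close M'_ge0 M'_le.
have s'_le : psin v' v <= s by rewrite psinC.
have opA'_le : (Alv_inv_opnorm A' lam' v' <= M'%:E)%E by rewrite opA'.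
have [_] := Alv_inv_opnorm_transfer v'0 v0 s'_le (ltW e_gt0) invA' opA'_le
  Alv_perturb_bwd D_gt0 D_ge.
by rewrite opA lee_fin.
Qed.

End Perturbation.

End ConditionNumber.

Theorem proposition4p1 (R : realType) (n : nat) (A A' : 'M[R[i]]_n)
    (v v' : 'cV[R[i]]_n) (lam lam' : R[i]) (eps : R) :
  frob A = 1 -> frob A' = 1 ->
  v != 0 -> v' != 0 ->
  A *m v = lam *: v ->
  0 < eps -> eps <= 37 / 100 ->
  (mu A lam v * (frob (A' - A) + absC (lam' - lam) + dP v' v)%:E
     <= (eps / (72 / 10))%:E)%E ->
  (((1 + eps)^-1)%:E * mu A lam v <= mu A' lam' v')%E /\
  (mu A' lam' v' <= (1 + eps)%:E * mu A lam v)%E.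
Proof.
move=> frobA frobA' v0 v'0 eig e_gt0 e_le close.
rewrite lee_pdivrMl; last lra.
set S := frob (A' - A) + absC (lam' - lam) + dP v' v in close.
(* [+oo * 0 = 0]: for [S = 0] the hypothesis does not make [mu A lam v] finite. *)
have [S0|S_neq0] := eqVneq S 0.
  by rewrite (mu_perturb0 v0 v'0 S0) lee_pemull ?mu_ge0 ?lee_fin; lra.
have [triv|/existsNP[w0 /not_implyP[vw0 /eqP w0_neq0]]] :=
  pselect (forall w, inT v w -> w = 0).
  by rewrite !mu_trivial ?mule0 //; exact: inT_trivial triv.
have S_gt0 : 0 < S.
  rewrite lt_def S_neq0 !addr_ge0 ?frob_ge0 ?absC_ge0 //.
  exact: le_trans (psin_ge0 v v') (psin_le_dP v0 v'0).
have [invA [M muA opA]] := mu_finite frobA S_gt0 close.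
rewrite muA -EFinM lee_fin in close.
have M_ge : 1 <= 2 * M.
  have Tv_ntriv : exists2 w, inT v w & w != 0 by exists w0.
  have opA_le : (Alv_inv_opnorm A lam v <= M%:E)%E by rewrite opA.
  by have := Alv_inv_opnorm_ge eig v0 Tv_ntriv invA opA_le; rewrite frobA mulr1.
have [invA' [M' opA' M'_le]] :=
  Alv_inv_opnorm_perturb_fwd frobA frobA' eig v0 v'0 e_gt0 e_le M_ge close invA opA.
have M_le := Alv_inv_opnorm_perturb_bwd frobA frobA' eig v0 v'0 e_gt0 e_le M_ge close
  opA invA' opA' M'_le.
by rewrite muA (muE frobA' invA') opA' -!EFinM !lee_fin.
Qed.
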